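(* Let $\mathcal F$ be a class of maps between partitioned Banach spaces satisfying: (i) $\mathcal F(Y,Y)$ contains the identity for every partitioned $Y$; (ii) $\mathcal F(Y,Z)$ is a vector space for all partitioned $Y,Z$; (iii) if $A\colon Y\to U$ and $B\colon V\to Z$ are P-affine and $F\in\mathcal F(U,V)$, then $B\circ F\circ A\in\mathcal F(Y,Z)$, for all partitioned $Y,Z,U,V$. Then a P-affine equivariant partitioned integrator map $\phi$ is $\mathcal F$-invariant preserving if and only if it is $\mathcal F$-functionally equivariant.
   Context: All spaces are real Banach spaces; $\mathfrak X(Y)$ denotes smooth vector fields on $Y$. Fix $N$. A partitioned Banach space is $Y=Y^{[1]}\oplus\cdots\oplus Y^{[N]}$. A partitioned integrator map is a collection of smooth maps $\phi\colon\mathfrak X(Y)\to\mathfrak X(Y)$, one for each partitioned Banach space. $f\sim_\chi g$ means $\chi'(y)f(y)=g(\chi(y))$ for all $y$. A map $A\colon Y\to U$ between partitioned spaces is P-affine if $A=\bigoplus_\nu A^{[\nu]}$ with each $A^{[\nu]}\colon Y^{[\nu]}\to U^{[\nu]}$ affine; $\phi$ is P-affine equivariant if $f\sim_A g$ implies $\phi(f)\sim_A\phi(g)$ for all P-affine $A$. A class $\mathcal F$ assigns to each pair of partitioned spaces $Y,Z$ a set $\mathcal F(Y,Z)$ of Gâteaux differentiable maps $Y\to Z$. For $F\colon Y\to Z$ and $f\in\mathfrak X(Y)$, the augmented vector field $g(y,z)=(f(y),F'(y)f(y))$ lives on $Y\times Z$ partitioned as $\bigoplus_\nu(Y^{[\nu]}\times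 Z^{[\nu]})$; $\phi$ is $F$-functionally equivariant if $\phi(f)\sim_{(\mathrm{id},F)}\phi(g)$ for all $f$, with $(\mathrm{id},F)(y)=(y,F(y))$; $\phi$ is $F$-invariant preserving if $F'f=0$ implies $F'\phi(f)=0$ for all $f$. $\mathcal F$-functionally equivariant / $\mathcal F$-invariant preserving mean the respective property for all $F\in\mathcal F(Y,Z)$ and all partitioned $Y,Z$. *)

From HB Require Import structures.
From mathcomp Require Import all_boot all_order all_algebra.
From mathcomp Require Import all_classical all_reals all_analysis.
Import numFieldNormedType.Exports.
Import Order.TTheory GRing.Theory Num.Theory.

Set Implicit Arguments.
Unset Strict Implicit.
Unset Printing Implicit Defensive.

Local Open Scope ring_scope.
Local Open Scope classical_set_scope.

Section ProdComplete.
Context {R : realType} (U V : completeNormedModType R).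

Lemma prod_cauchy_cvg (F : set_system (U * V : normedModType R)) :
  ProperFilter F -> cauchy F -> cvg (F : set_system (U * V : normedModType R)).
Proof.
move=> FF /cauchy_ballP Fc.
have c1 : cauchy (fst @ F).
  apply/cauchy_ballP => e e0; rewrite near_simpl.
  by apply: filterS (Fc e e0) => -[[? ?] [? ?]] [].
have c2 : cauchy (snd @ F).
  apply/cauchy_ballP => e e0; rewrite near_simpl.
  by apply: filterS (Fc e e0) => -[[? ?] [? ?]] [].
apply/cvg_ex; exists (lim (fst @ F), lim (snd @ F)).
have H := cvg_pair (cauchy_cvg _ c1) (cauchy_cvg _ c2).
have {}H := H ltac:(typeclasses eauto) ltac:(typeclasses eauto)
  ltac:(typeclasses eauto) ltac:(typeclasses eauto) ltac:(typeclasses eauto).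
refine (cvg_trans _ H) => A /= FA.
by move: FA; rewrite /nbhs /=; apply: filterS => -[].
Qed.

HB.instance Definition _ := Uniform_isComplete.Build (U * V)%type prod_cauchy_cvg.

End ProdComplete.

Section Defs.
Context {R : realType} {N : nat}.

(** A partitioned Banach space Y = Y^[1] (+) ... (+) Y^[N]: a real Banach
    space together with the N bounded projections onto the summands
    (complementary: P_i P_j = delta_ij P_i and sum_i P_i = id). The summand
    Y^[i] is the range of [proj i]. *)
Record pspace := PSpace {
  psp :> completeNormedModType R;
  proj : 'I_N -> psp -> psp;
  proj_linear : forall i, linear (proj i);
  proj_cont : forall i, continuous (proj i);
  proj_proj : forall i j y, proj i (proj j y) = if i == j then proj i y else 0;
  proj_sum : forall y, \sum_i proj i y = y }.

Definition pprod_proj (Y Z : pspace) (i : 'I_N) (p : (Y * Z)%type) :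
  (Y * Z)%type := (proj i p.1, proj i p.2).
Arguments pprod_proj : clear implicits.

Lemma pprod_proj_linear (Y Z : pspace) i : linear (pprod_proj Y Z i).
Proof.
move=> a [y1 z1] [y2 z2].
by rewrite /pprod_proj /= (proj_linear i) (proj_linear i).
Qed.

Lemma pprod_proj_cont (Y Z : pspace) i : continuous (pprod_proj Y Z i).
Proof.
move=> p; apply: cvg_pair.
- apply: (@continuous_comp _ _ _ fst (proj i)); [exact: cvg_fst|exact: proj_cont].
- apply: (@continuous_comp _ _ _ snd (proj i)); [exact: cvg_snd|exact: proj_cont].
Qed.

Lemma pprod_proj_proj (Y Z : pspace) i j p :
  pprod_proj Y Z i (pprod_proj Y Z j p) =
  if i == j then pprod_proj Y Z i p else 0.
Proof.
rewrite /pprod_proj /= !proj_proj; by case: eqP.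
Qed.

Lemma pprod_proj_sum (Y Z : pspace) p : \sum_i pprod_proj Y Z i p = p.
Proof.
case: p => y z.
have h1 : (\sum_i pprod_proj Y Z i (y, z)).1 = \sum_i proj i y.
  by rewrite (big_morph fst (id1 := 0) (op1 := +%R)) //.
have h2 : (\sum_i pprod_proj Y Z i (y, z)).2 = \sum_i proj i z.
  by rewrite (big_morph snd (id1 := 0) (op1 := +%R)) //.
by move: h1 h2; rewrite !proj_sum; case: (\sum_i _) => a b /= -> ->.
Qed.

Definition pprod (Y Z : pspace) : pspace :=
  @PSpace (Y * Z)%type (pprod_proj Y Z) (@pprod_proj_linear Y Z)
    (@pprod_proj_cont Y Z) (@pprod_proj_proj Y Z) (@pprod_proj_sum Y Z).

(** Smoothness (C^infinity) in the sense of Michal--Bastiani: C^0 = continuous,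
    C^(k+1) = continuous, all directional (Gateaux) derivatives exist, and
    (x, v) |-> D_v f(x) is C^k on V x V. On Banach spaces this coincides
    with Frechet C^infinity. *)
Fixpoint Ck (k : nat) (V W : normedModType R) (f : V -> W) : Prop :=
  match k with
  | 0 => continuous f
  | k.+1 => [/\ continuous f, (forall x v, derivable f x v) &
             Ck k (fun p : (V * V)%type => derive f p.1 p.2)]
  end.

Definition smooth (V W : normedModType R) (f : V -> W) : Prop :=
  forall k, Ck k f.

Definition gateaux_differentiable (V W : normedModType R) (F : V -> W) : Prop :=
  forall y, (forall v, derivable F y v) /\
    linear (fun v => derive F y v) /\ continuous (fun v => derive F y v).

Definition related (V W : normedModType R) (chi : V -> W)
  (f : V -> V) (g : W -> W) : Prop :=
  forall y, derive chi y (f y) = g (chi y).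

Definition caffine (V W : normedModType R) (A : V -> W) : Prop :=
  continuous A /\ linear (fun y => A y - A 0).

(** P-affine maps A = (+)_nu A^[nu], A^[nu] : Y^[nu] -> U^[nu] affine.
    A^[nu] is represented by the affine map [Anu nu] o [proj nu] of Y,
    taking values in U^[nu]. *)
Definition paffine (Y U : pspace) (A : Y -> U) : Prop :=
  exists Anu : 'I_N -> Y -> U,
    [/\ forall i, caffine (Anu i),
        forall i y, proj i (Anu i y) = Anu i y &
        forall y, A y = \sum_i Anu i (proj i y)].

(** A partitioned integrator map: for every partitioned space Y, a map
    phi Y on vector fields on Y sending smooth vector fields to smooth
    vector fields, smoothly: it maps smooth curves of vector fields
    (t,y) |-> c t y to smooth curves (t,y) |-> phi Y (c t) y
    (smoothness on the space of smooth vector fields, convenient-calculus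
    sense). Only its values on smooth vector fields matter. *)
Definition integrator_map (phi : forall Y : pspace, (Y -> Y) -> (Y -> Y)) :
  Prop :=
  forall (Y : pspace) (c : R^o -> Y -> Y),
    smooth (fun p : (R^o * Y)%type => c p.1 p.2) ->
    smooth (fun p : (R^o * Y)%type => phi Y (c p.1) p.2).

Definition paffine_equivariant
  (phi : forall Y : pspace, (Y -> Y) -> (Y -> Y)) : Prop :=
  forall (Y U : pspace) (A : Y -> U), paffine A ->
  forall (f : Y -> Y) (g : U -> U), smooth f -> smooth g ->
    related A f g -> related A (phi Y f) (phi U g).

Definition map_class (Fc : forall Y Z : pspace, (Y -> Z) -> Prop) : Prop :=
  forall (Y Z : pspace) (F : Y -> Z), Fc Y Z F -> gateaux_differentiable F.

Definition class_has_id (Fc : forall Y Z : pspace, (Y -> Z) -> Prop) : Prop :=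
  forall Y : pspace, Fc Y Y id.

Definition class_vector_space (Fc : forall Y Z : pspace, (Y -> Z) -> Prop) :
  Prop :=
  forall Y Z : pspace,
    [/\ Fc Y Z (fun _ => 0),
        forall F G, Fc Y Z F -> Fc Y Z G -> Fc Y Z (fun y => F y + G y) &
        forall (a : R) F, Fc Y Z F -> Fc Y Z (fun y => a *: F y)].

Definition class_paffine_comp (Fc : forall Y Z : pspace, (Y -> Z) -> Prop) :
  Prop :=
  forall (Y Z U V : pspace) (A : Y -> U) (B : V -> Z) (F : U -> V),
    paffine A -> paffine B -> Fc U V F -> Fc Y Z (B \o F \o A).

Definition augmented (Y Z : pspace) (F : Y -> Z) (f : Y -> Y) :
  pprod Y Z -> pprod Y Z :=
  fun p => (f p.1, derive F p.1 (f p.1)).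

Definition graph_map (Y Z : pspace) (F : Y -> Z) : Y -> pprod Y Z :=
  fun y => (y, F y).

(** F-functional equivariance, for all F in the class. phi is only defined
    on smooth vector fields, so the condition is imposed whenever the
    augmented vector field g is smooth (as is needed for phi(g) to make
    sense). *)
Definition class_functionally_equivariant
  (Fc : forall Y Z : pspace, (Y -> Z) -> Prop)
  (phi : forall Y : pspace, (Y -> Y) -> (Y -> Y)) : Prop :=
  forall (Y Z : pspace) (F : Y -> Z), Fc Y Z F ->
  forall f : Y -> Y, smooth f -> smooth (augmented F f) ->
    related (graph_map F) (phi Y f) (phi (pprod Y Z) (augmented F f)).

Definition class_invariant_preserving
  (Fc : forall Y Z : pspace, (Y -> Z) -> Prop)
  (phi : forall Y : pspace, (Y -> Y) -> (Y -> Y)) : Prop :=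
  forall (Y Z : pspace) (F : Y -> Z), Fc Y Z F ->
  forall f : Y -> Y, smooth f ->
    (forall y, derive F y (f y) = 0) ->
    (forall y, derive F y (phi Y f y) = 0).

End Defs.

Arguments pspace R N : clear implicits.

From Pilot Require Import Defs.
From HB Require Import structures.
From mathcomp Require Import all_boot all_order all_algebra.
From mathcomp Require Import all_classical all_reals all_analysis.
Import numFieldNormedType.Exports.
Import GRing.Theory.

(* If phi preserves the invariants of the class, apply this to the graph
   defect G(y, z) = z - F y, which belongs to the class by (i)-(iii) and is an
   invariant of the augmented field g: phi(g) is then tangent to the level sets
   of G, while equivariance under the P-affine projection (y, z) |-> y
   identifies the first component of phi(g) with phi(f).  On the graph of F
   this is exactly phi(f) ~ phi(g) along (id, F).
   Conversely, if F' f = 0 then g(y, z) = (f y, 0) is invariant under the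
   P-affine maps (y, z) |-> (y, c), so the second component of phi(g) vanishes,
   and functional equivariance turns this into F' phi(f) = 0. *)

Set Implicit Arguments.
Unset Strict Implicit.
Unset Printing Implicit Defensive.

Local Open Scope ring_scope.
Local Open Scope classical_set_scope.

Section Directional.
Context {R : numFieldType}.
Implicit Types U V W : normedModType R.

Lemma dq_comp_linear U V W (h : V -> W) (L : U -> V) a v :
  linear L ->
  (fun t : R => t^-1 *: ((h \o L \o shift a) (t *: v) - (h \o L) a)) =
  (fun t : R => t^-1 *: ((h \o shift (L a)) (t *: L v) - h (L a))).
Proof. by move=> linL; apply: funext => t; rewrite /= linL. Qed.

Lemma derivable_comp_linear U V W (h : V -> W) (L : U -> V) a v :
  linear L -> derivable (h \o L) a v = derivable h (L a) (L v).
Proof. by move=> linL; rewrite /derivable dq_comp_linear. Qed.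

Lemma derive_comp_linear U V W (h : V -> W) (L : U -> V) a v :
  linear L -> 'D_v (h \o L) a = 'D_(L v) h (L a).
Proof. by move=> linL; rewrite /derive dq_comp_linear. Qed.

Lemma is_derive_linear V W (L : V -> W) a v : linear L -> is_derive a v L (L v).
Proof.
move=> linL; suff : is_derive a v (id \o L) (L v) by [].
apply: DeriveDef; first by rewrite derivable_comp_linear.
by rewrite derive_comp_linear // derive_id.
Qed.

Lemma derive_linear V W (L : V -> W) a v : linear L -> 'D_v L a = L v.
Proof. by move=> linL; have [] := is_derive_linear a v linL. Qed.

Lemma is_derive_pair U V W (u : U -> V) (w : U -> W) a v du dw :
  is_derive a v u du -> is_derive a v w dw ->
  is_derive a v (fun x => (u x, w x)) (du, dw).
Proof.
move=> [du_ex <-] [dw_ex <-].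
have dq_pair : (fun t : R => t^-1 *: (((fun x => (u x, w x)) \o shift a) (t *: v)
    - (u a, w a))) @ 0^' --> ('D_v u a, 'D_v w a) by exact: cvg_pair.
by split; [apply/cvg_ex; exists ('D_v u a, 'D_v w a)|exact: cvg_lim dq_pair].
Qed.

Lemma derive_fst_cst V W (c : W) (p q : V * W) :
  'D_q (fun p : V * W => (p.1, c)) p = (q.1, 0).
Proof.
have fst_linear : linear (@fst V W) by [].
by have [] := is_derive_pair (is_derive_linear p q fst_linear) (is_derive_cst c p q).
Qed.

Definition graph_defect V W (F : V -> W) (p : V * W) : W := p.2 - F p.1.

Lemma derive_graph_defect V W (F : V -> W) (p q : V * W) :
  derivable F p.1 q.1 -> 'D_q (graph_defect F) p = q.2 - 'D_q.1 F p.1.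
Proof.
move=> dF; have fst_linear : linear (@fst V W) by [].
have snd_linear : linear (@snd V W) by [].
have dFfst : is_derive p q (F \o fst) ('D_q.1 F p.1).
  by split; rewrite (derivable_comp_linear, derive_comp_linear).
by have [] := is_deriveB (is_derive_linear p q snd_linear) dFfst.
Qed.
End Directional.

Section Smooth.
Context {R : realType}.
Implicit Types U V W : normedModType R.

Lemma continuous_pair U V W (u : U -> V) (w : U -> W) :
  continuous u -> continuous w -> continuous (fun x => (u x, w x)).
Proof. by move=> cu cw x; apply: cvg_pair; [exact: cu|exact: cw]. Qed.

Lemma Ck_cst k V W (c : W) : Ck k (fun _ : V => c).
Proof.
elim: k V W c => [|k IHk] V W c /=; first exact: cst_continuous.
split; [exact: cst_continuous|exact: derivable_cst|].
have -> : (fun p : V * V => 'D_p.2 (fun=> c) p.1) = fun=> 0.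
  by apply: funext => p; rewrite derive_cst.
exact: IHk.
Qed.

Lemma Ck_pair k U V W (u : U -> V) (w : U -> W) :
  Ck k u -> Ck k w -> Ck k (fun x => (u x, w x)).
Proof.
elim: k U V W u w => [|k IHk] U V W u w /=; first exact: continuous_pair.
move=> [cu du Du] [cw dw Dw].
have dpair x v := is_derive_pair (derivableP (du x v)) (derivableP (dw x v)).
split; [exact: continuous_pair|by []|].
have -> : (fun p : U * U => 'D_p.2 (fun x => (u x, w x)) p.1) =
          fun p => ('D_p.2 u p.1, 'D_p.2 w p.1).
  by apply: funext => p; rewrite derive_val.
exact: IHk Du Dw.
Qed.

Lemma Ck_comp_linear k U V W (h : V -> W) (L : U -> V) :
  continuous L -> linear L -> Ck k h -> Ck k (h \o L).
Proof.
elim: k U V W h L => [|k IHk] U V W h L cL linL /=.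
  by move=> ch x; apply: continuous_comp; [exact: cL|exact: ch].
move=> [ch dh Dh]; split.
- by move=> x; apply: continuous_comp; [exact: cL|exact: ch].
- by move=> x v; rewrite derivable_comp_linear.
have -> : (fun p : U * U => 'D_p.2 (h \o L) p.1) =
          (fun q : V * V => 'D_q.2 h q.1) \o (fun p : U * U => (L p.1, L p.2)).
  by apply: funext => p; rewrite /= derive_comp_linear.
apply: IHk => //.
- by apply: continuous_pair => p;
    [apply: (@continuous_comp _ _ _ fst L); [exact: cvg_fst|exact: cL]
    |apply: (@continuous_comp _ _ _ snd L); [exact: cvg_snd|exact: cL]].
- by move=> a [x y] [x' y']; rewrite /= !linL.
Qed.
End Smooth.

Lemma linear_nmod_morphism (R : pzRingType) (U V : lmodType R) (f : U -> V) :
  linear f -> nmod_morphism f.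
Proof. by move=> /GRing.semilinear_linear /GRing.nmod_morphism_semilinear. Qed.

Section Partitioned.
Context {R : realType} {N : nat}.
Implicit Types Y Z U : pspace R N.

Lemma proj0 Y i : Defs.proj i (0 : Y) = 0.
Proof. exact: (linear_nmod_morphism (proj_linear i)).1. Qed.

Lemma projD Y i : {morph Defs.proj i : x y / x + y :> Y}.
Proof. exact: (linear_nmod_morphism (proj_linear i)).2. Qed.

Definition plinear Y U (L : Y -> U) : Prop :=
  [/\ continuous L, linear L & forall i y, Defs.proj i (L y) = L (Defs.proj i y)].

Lemma paffine_ext Y U (A B : Y -> U) : A =1 B -> paffine A -> paffine B.
Proof. by move=> AB [Anu [affA projA sumA]]; exists Anu; split=> // y; rewrite -AB. Qed.

Lemma paffine_add_plinear Y U (c : U) (L : Y -> U) :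
  plinear L -> paffine (fun y => c + L y).
Proof.
case=> cL linL projL; have L0 := (linear_nmod_morphism linL).1.
exists (fun i y => Defs.proj i (c + L y)); split.
- move=> i; split.
    move=> y; apply: (@continuous_comp _ _ _ (fun y => c + L y) (Defs.proj i)).
      by apply: cvgD; [exact: cvg_cst|exact: cL].
    exact: proj_cont.
  have -> : (fun y => Defs.proj i (c + L y) - Defs.proj i (c + L 0)) = Defs.proj i \o L.
    by apply: funext => y; rewrite L0 addr0 projD addrAC subrr add0r.
  by move=> a u v; rewrite /= linL proj_linear.
- by move=> i y; rewrite proj_proj eqxx.
- move=> y; rewrite -[LHS]proj_sum; apply: eq_bigr => i _.
  by rewrite !projD !projL proj_proj eqxx.
Qed.

Lemma paffine_plinear Y U (L : Y -> U) : plinear L -> paffine L.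
Proof. by move=> /(paffine_add_plinear 0); apply: paffine_ext => y; rewrite add0r. Qed.

Lemma plinear_id Y : plinear (@id Y).
Proof. by split=> // y; exact: cvg_id. Qed.

Lemma plinear_fst Y Z : plinear (fun p : pprod Y Z => p.1).
Proof. by split=> // p; exact: cvg_fst. Qed.

Lemma plinear_snd Y Z : plinear (fun p : pprod Y Z => p.2).
Proof. by split=> // p; exact: cvg_snd. Qed.

Lemma plinear_fst0 Y Z : plinear (fun p : pprod Y Z => (p.1, 0) : pprod Y Z).
Proof.
split=> [||i p].
- by apply: continuous_pair => [p|]; [exact: cvg_fst|exact: cst_continuous].
- by move=> a p q; apply: injective_projections => /=; rewrite ?scaler0 ?addr0.
- by rewrite /= /pprod_proj /= proj0.
Qed.

Lemma paffine_fst_cst Y Z (c : Z) : paffine (fun p : pprod Y Z => (p.1, c) : pprod Y Z).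
Proof.
have := paffine_add_plinear ((0, c) : pprod Y Z) (plinear_fst0 Y Z).
by apply: paffine_ext => p; apply: injective_projections => /=; rewrite ?add0r ?addr0.
Qed.

Lemma derive_graph_map Y Z (F : Y -> Z) y v :
  derivable F y v -> 'D_v (graph_map F) y = (v, 'D_v F y) :> pprod Y Z.
Proof. by move=> /derivableP dF; have [] := is_derive_pair (is_derive_id y v) dF. Qed.

Definition lift_fst {Y} Z (f : Y -> Y) : pprod Y Z -> pprod Y Z := fun p => (f p.1, 0).
#[global] Arguments lift_fst {Y} Z f.

Lemma smooth_lift_fst Y Z (f : Y -> Y) : smooth f -> smooth (lift_fst Z f).
Proof.
have [cfst linfst _] := plinear_fst Y Z.
by move=> sf k; apply: Ck_pair; [exact: Ck_comp_linear|exact: Ck_cst].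
Qed.
End Partitioned.

Section Equivalence.
Context {R : realType} {N : nat}.
Variables (Fc : forall Y Z : pspace R N, (Y -> Z) -> Prop)
  (phi : forall Y : pspace R N, (Y -> Y) -> (Y -> Y)).
Hypotheses (Fc_gateaux : map_class Fc) (phi_equivariant : paffine_equivariant phi)
  (Fc_id : class_has_id Fc) (Fc_vector_space : class_vector_space Fc)
  (Fc_paffine_comp : class_paffine_comp Fc).
Implicit Types Y Z : pspace R N.

Lemma phi_fst Y Z (f : Y -> Y) (g : pprod Y Z -> pprod Y Z) :
  smooth f -> smooth g -> (forall p, (g p).1 = f p.1) ->
  forall p, (phi g p).1 = phi f p.1.
Proof.
move=> sf sg gf p; have [_ fst_linear _] := plinear_fst Y Z.
have gRf : related (fun p : pprod Y Z => p.1) g f.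
  by move=> q; rewrite derive_linear.
have := phi_equivariant (paffine_plinear (plinear_fst Y Z)) sg sf gRf p.
by rewrite derive_linear.
Qed.

Lemma phi_lift_fst_snd Y Z (f : Y -> Y) :
  smooth f -> forall p, (phi (lift_fst Z f) p).2 = 0.
Proof.
move=> sf [y z]; have sg := smooth_lift_fst Z sf.
have gRg : related (fun p : pprod Y Z => (p.1, z) : pprod Y Z) (lift_fst Z f) (lift_fst Z f).
  by move=> q; rewrite derive_fst_cst.
have := phi_equivariant (paffine_fst_cst Y z) sg sg gRg (y, z).
by rewrite derive_fst_cst => <-.
Qed.

Lemma class_graph_defect Y Z (F : Y -> Z) :
  Fc F -> Fc (graph_defect F : pprod Y Z -> Z).
Proof.
move=> FF; have [_ FcD FcZ] := Fc_vector_space (pprod Y Z) Z.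
have idZ := paffine_plinear (plinear_id Z).
have Fsnd := Fc_paffine_comp (paffine_plinear (plinear_snd Y Z)) idZ (Fc_id Z).
have Ffst := Fc_paffine_comp (paffine_plinear (plinear_fst Y Z)) idZ FF.
have := FcD _ _ Fsnd (FcZ (-1) _ Ffst).
by congr Fc; apply: funext => p; rewrite /graph_defect scaleN1r.
Qed.

Lemma phi_augmented_snd Y Z (F : Y -> Z) (f : Y -> Y) :
  class_invariant_preserving Fc phi -> Fc F -> smooth (augmented F f) ->
  forall p, (phi (augmented F f) p).2 = 'D_((phi (augmented F f) p).1) F p.1.
Proof.
move=> IP FF sg p; have dF y v := (Fc_gateaux FF y).1 v.
have G0 q : 'D_(augmented F f q) (graph_defect F) q = 0.
  by rewrite derive_graph_defect ?subrr.
have := IP _ _ _ (class_graph_defect FF) _ sg G0 p.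
by rewrite derive_graph_defect // => /eqP; rewrite subr_eq0 => /eqP.
Qed.

Lemma functionally_equivariant_of_invariant_preserving :
  class_invariant_preserving Fc phi -> class_functionally_equivariant Fc phi.
Proof.
move=> IP Y Z F FF f sf sg y; have dF v := (Fc_gateaux FF y).1 v.
have fst_eq := phi_fst sf sg (fun=> erefl) (y, F y).
rewrite derive_graph_map //; apply: injective_projections => /=.
  by rewrite fst_eq.
by rewrite (phi_augmented_snd IP FF sg) fst_eq.
Qed.

Lemma invariant_preserving_of_functionally_equivariant :
  class_functionally_equivariant Fc phi -> class_invariant_preserving Fc phi.
Proof.
move=> FE Y Z F FF f sf F'f0 y; have dF v := (Fc_gateaux FF y).1 v.
have gE : augmented F f = lift_fst Z f by apply: funext => p; rewrite /augmented F'f0.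
have sg : smooth (augmented F f) by rewrite gE; exact: smooth_lift_fst.
have := FE _ _ _ FF f sf sg y; rewrite derive_graph_map // => /(congr1 snd) /= ->.
by rewrite gE phi_lift_fst_snd.
Qed.
End Equivalence.

Theorem theorem4p16 (R : realType) (N : nat)
  (Fc : forall Y Z : pspace R N, (Y -> Z) -> Prop)
  (phi : forall Y : pspace R N, (Y -> Y) -> (Y -> Y)) :
  map_class Fc ->
  class_has_id Fc ->
  class_vector_space Fc ->
  class_paffine_comp Fc ->
  integrator_map phi ->
  paffine_equivariant phi ->
  (class_invariant_preserving Fc phi <-> class_functionally_equivariant Fc phi).
Proof.
move=> Fc_gateaux Fc_id Fc_vector_space Fc_paffine_comp _ phi_equivariant.
split.
- exact: (functionally_equivariant_of_invariant_preserving Fc_gateaux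
    phi_equivariant Fc_id Fc_vector_space Fc_paffine_comp).
- exact: (invariant_preserving_of_functionally_equivariant Fc_gateaux
    phi_equivariant).
Qed.
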